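(* Suppose a task class requires output precision $\Delta$ from minimal embedding perturbation $r$, so that $\Lambda(W)\ge\Delta/r$. Then the LAWS routing radius $\tau^* = (\delta-\varepsilon_{\mathrm{fit}}-2\Lambda(W)C_E)/(\Lambda(W)C_E)$ satisfies \[ \tau^* \le \frac{\delta - \varepsilon_{\mathrm{fit}} - 2(\Delta/r)C_E}{(\Delta/r)C_E}. \] If $\Delta > r(\delta-\varepsilon_{\mathrm{fit}})/(2C_E)$, then $\tau^*<0$ and no expert can be certified, so LAWS must always invoke the base model for such tasks.
   Context: $\Lambda(W)>0$ is the end-to-end Lipschitz constant of the transformer base model, $C_E = \max_{t,t'}\|E(t)-E(t')\|$ the embedding diameter, $\delta>0$ the LAWS quality threshold and $\varepsilon_{\mathrm{fit}}\ge0$ the expert fitting error, with $\delta - \varepsilon_{\mathrm{fit}} \ge 0$ implicitly. An expert with negative routing radius covers no query. *)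

From Stdlib Require Import Reals.
Open Scope R_scope.

Definition tau_star (delta eps_fit Lambda C_E : R) : R :=
  (delta - eps_fit - 2 * Lambda * C_E) / (Lambda * C_E).

Definition covers {X : Type} (dist : X -> X -> R) (c : X) (tau : R) (e : X) : Prop :=
  dist c e <= tau.

From Stdlib Require Import Reals Lra.
Open Scope R_scope.

(* Writing the radius as (delta - eps_fit) / (Lambda C_E) - 2 shows it is
   antitone in Lambda, so the lower bound Delta / r <= Lambda caps it by its
   value at Delta / r.  The precision condition says exactly that
   delta - eps_fit < 2 (Delta / r) C_E <= 2 Lambda C_E, which makes the radius
   negative, and a negative radius is below every (nonnegative) distance. *)

Lemma tau_star_shifted (delta eps_fit Lambda C_E : R) :
  Lambda <> 0 -> C_E <> 0 ->
  tau_star delta eps_fit Lambda C_E = (delta - eps_fit) / (Lambda * C_E) - 2.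
Proof. intros hL hC; unfold tau_star; field; split; assumption. Qed.

Lemma tau_star_antitone (delta eps_fit L1 L2 C_E : R) :
  0 <= delta - eps_fit -> 0 < C_E -> 0 < L1 -> L1 <= L2 ->
  tau_star delta eps_fit L2 C_E <= tau_star delta eps_fit L1 C_E.
Proof.
  intros hde hC hL1 hL12.
  assert (hC1 : 0 < L1 * C_E) by (apply Rmult_lt_0_compat; lra).
  assert (hC12 : L1 * C_E <= L2 * C_E) by (apply Rmult_le_compat_r; lra).
  rewrite !tau_star_shifted by lra.
  assert ((delta - eps_fit) / (L2 * C_E) <= (delta - eps_fit) / (L1 * C_E)).
  { apply Rmult_le_compat_l; [exact hde|].
    apply Rinv_le_contravar; assumption. }
  lra.
Qed.

Lemma tau_star_lt0 (delta eps_fit Lambda C_E : R) :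
  0 < Lambda * C_E -> delta - eps_fit < 2 * Lambda * C_E ->
  tau_star delta eps_fit Lambda C_E < 0.
Proof.
  intros hLC hlt; unfold tau_star, Rdiv.
  apply Rmult_neg_pos; [lra | now apply Rinv_0_lt_compat].
Qed.

Lemma precision_gap (a C_E Delta r : R) :
  0 < C_E -> 0 < r -> r * a / (2 * C_E) < Delta -> a < 2 * (Delta / r) * C_E.
Proof.
  intros hC hr hgap.
  apply (Rmult_lt_reg_r (r / (2 * C_E))).
  - apply Rdiv_lt_0_compat; lra.
  - replace (2 * (Delta / r) * C_E * (r / (2 * C_E))) with Delta by (field; lra).
    replace (a * (r / (2 * C_E))) with (r * a / (2 * C_E)) by (field; lra).
    exact hgap.
Qed.

Lemma not_covers_neg_radius {X : Type} (dist : X -> X -> R) (c e : X) (tau : R) :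
  (forall x y, 0 <= dist x y) -> tau < 0 -> ~ covers dist c tau e.
Proof. intros hpos htau hcov; unfold covers in hcov; specialize (hpos c e); lra. Qed.

Theorem mainTheorem13
  (Lambda C_E delta eps_fit Delta r : R)
  (hL : 0 < Lambda) (hC : 0 < C_E) (hd : 0 < delta) (he : 0 <= eps_fit)
  (hde : 0 <= delta - eps_fit) (hD : 0 < Delta) (hr : 0 < r)
  (hLow : Delta / r <= Lambda) :
  tau_star delta eps_fit Lambda C_E
    <= (delta - eps_fit - 2 * (Delta / r) * C_E) / ((Delta / r) * C_E)
  /\ (r * (delta - eps_fit) / (2 * C_E) < Delta ->
      tau_star delta eps_fit Lambda C_E < 0
      /\ forall (X : Type) (dist : X -> X -> R),
           (forall x y, 0 <= dist x y) ->
           forall c e : X, ~ covers dist c (tau_star delta eps_fit Lambda C_E) e).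
Proof.
  assert (hk : 0 < Delta / r) by (apply Rdiv_lt_0_compat; assumption).
  split.
  - exact (tau_star_antitone delta eps_fit (Delta / r) Lambda C_E hde hC hk hLow).
  - intros hgap.
    assert (hneg : tau_star delta eps_fit Lambda C_E < 0).
    { apply tau_star_lt0; [apply Rmult_lt_0_compat; assumption|].
      pose proof (precision_gap (delta - eps_fit) C_E Delta r hC hr hgap).
      assert (Delta / r * C_E <= Lambda * C_E) by (apply Rmult_le_compat_r; lra).
      lra. }
    split; [exact hneg|].
    intros X dist hpos c e; exact (not_covers_neg_radius dist c e _ hpos hneg).
Qed.
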